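(* Let $\xi=(\omega,\gamma,\mu,c)$ be a normalized quasi-abelian 3-cocycle on a finite crossed module $(G,X,\partial)$, and let $R$ be a complete set of representatives of the orbits of $G$ on $X$. For $a\in R$ let $\phi_a(g,h)=\gamma_{g,h}(a)$ for $g,h\in\mathrm{Stab}_G(a)=\{g\in G\mid {}^ga=a\}$ (a 2-cocycle on $\mathrm{Stab}_G(a)$). Then the set of isomorphism classes of simple objects of $\mathcal{C}(\xi)^G$ is in bijection with the set of isomorphism classes of $$\Gamma=\{(a,V)\mid a\in R,\ V \text{ an irreducible module over } \mathbb{K}_{\phi_a}[\mathrm{Stab}_G(a)]\},$$ where $(a,V)$ and $(a',V')$ are isomorphic if $a=a'$ and $V\cong V'$.
   Context: $\mathbb{K}$ is an algebraically closed field of characteristic $0$. A module over the twisted group algebra $\mathbb{K}_{\phi}[H]$ (for a 2-cocycle $\phi$ on a finite group $H$) means, as used here, a finite-dimensional vector space $V$ with linear maps $v\mapsto t\triangleright v$ ($t\in H$) such that $st\triangleright v=\phi(s,t)\,(s\triangleright(t\triangleright v))$ and $e\triangleright v=v$. A finite crossed module is a triple $(G,X,\partial)$ with $G,X$ finite groups, $G$ acting on $X$ by automorphisms $(g,x)\mapsto {}^{g}x$, and $\partial:X\to G$ a homomorphism with ${}^{\partial(x)}x'=xx'x^{-1}$ and $\partial({}^gx)=g\partial(x)g^{-1}$. A quasi-abelian 3-cocycle on it is a quadruple $\xi=(\omega,\gamma,\mu,c)$ of functions $\omega:X^3\to\mathbb{K}^\times$, $(g,h,x)\mapsto\gamma_{g,h}(x)$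 on $G\times G\times X$, $(g,x,y)\mapsto\mu_g(x,y)$ on $G\times X\times X$, $c:X^2\to\mathbb{K}^\times$, such that for all $g,h,k\in G$, $w,x,y,z\in X$: (a) $\omega(x,y,z)\omega(w,xy,z)\omega(w,x,y)=\omega(w,x,yz)\omega(wx,y,z)$; (b) $\gamma_{h,k}(x)\gamma_{g,hk}(x)=\gamma_{gh,k}(x)\gamma_{g,h}({}^kx)$; (c) $\frac{\mu_g(y,z)\mu_g(x,yz)}{\mu_g(xy,z)\mu_g(x,y)}=\frac{\omega({}^gx,{}^gy,{}^gz)}{\omega(x,y,z)}$; (d) $\frac{\gamma_{g,h}(x)\gamma_{g,h}(y)}{\gamma_{g,h}(xy)}=\frac{\mu_g({}^hx,{}^hy)\mu_h(x,y)}{\mu_{gh}(x,y)}$; (e) $\frac{c({}^gx,{}^gy)}{c(x,y)}=\frac{\mu_g(xyx^{-1},x)}{\mu_g(x,y)}\cdot\frac{\gamma_{g\partial(x)g^{-1},g}(y)}{\gamma_{g,\partial(x)}(y)}$; (f) $c(xy,z)=\frac{\omega(x,y,z)\,\omega((xy)z(xy)^{-1},x,y)}{\omega(x,yzy^{-1},y)\,\gamma_{\partial(x),\partial(y)}(z)}\,c(x,yzy^{-1})\,c(y,z)$; (g) $c(x,yz)=\frac{\omega(xyx^{-1},x,z)}{\omega(x,y,z)\,\omega(xyx^{-1},xzx^{-1},x)\,\mu_{\partial(x)}(y,z)}\,c(x,y)\,c(x,z)$. It is normalized if $\omega(x,y,z)=1$ whenever one of $x,y,z$ is $e$, $\gamma_{g,h}(x)=1$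 whenever one of $g,h,x$ is $e$, $\mu_g(x,y)=1$ whenever one of $g,x,y$ is $e$, and $c(x,y)=1$ whenever $x$ or $y$ is $e$. $\mathcal{C}(\xi)$ denotes the fusion category $\mathrm{Vec}_X^\omega$ of finite-dimensional $X$-graded vector spaces (tensor product $\otimes_\mathbb{K}$ with degrees multiplied, associativity $(u\otimes v)\otimes w\mapsto\omega(x,y,z)u\otimes(v\otimes w)$) with: the $G$-grading with $\mathcal{C}_g$ the objects supported on $\partial^{-1}(g)$; functors $T_g$ sending homogeneous $V$ of degree $x$ to the same space in degree ${}^gx$; and for homogeneous $V,W$ of degrees $x,y$ the isomorphisms $\tilde\gamma_{g,h}(V)=\gamma_{g,h}(x)\mathrm{id}_V:T_{gh}(V)\to T_gT_h(V)$, $\tilde\mu_g(V,W)=\mu_g(x,y)\mathrm{id}:T_g(V\otimes W)\to T_gV\otimes T_gW$, $\tilde c(V,W)=c(x,y)\tau_{V,W}:V\otimes W\to T_{\partial(x)}(W)\otimes V$ ($\tau$ the flip). The equivariantization $\mathcal{C}(\xi)^G$ is the braided fusion category of pairs $(V,\{u_g\}_{g\in G})$, $u_g:T_g(V)\to V$ isomorphisms with $u_{gh}=u_g\circ T_g(u_h)\circ\tilde\gamma_{g,h}(V)$; morphisms are morphisms of $\mathrm{Vec}_X^\omega$ commuting with the $u_g$; tensor product $(V\otimes V',\{(u_g\otimes u'_g)\circ\tilde\mu_g(V,V')\})$; braiding given on $V_g\otimes V'$ ($V_g$ the component of $V$ in $\mathcal{C}_g$) by $(u'_g\otimes\mathrm{id})\circ\tilde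 c(V_g,V')$. *)

From HB Require Import structures.
From mathcomp Require Import all_boot all_order all_fingroup all_algebra.
Set Implicit Arguments. Unset Strict Implicit. Unset Printing Implicit Defensive.
Import GRing.Theory.
Local Open Scope ring_scope.

Section Defs.
Variables (K : fieldType) (gT xT : finGroupType).

Definition crossed_module (act : gT -> xT -> xT) (del : xT -> gT) : Prop :=
  (forall x, act 1%g x = x) /\
  (forall g h x, act (g * h)%g x = act g (act h x)) /\
  (forall g x y, act g (x * y)%g = (act g x * act g y)%g) /\
  (forall x y, del (x * y)%g = (del x * del y)%g) /\
  (forall x x', act (del x) x' = (x * x' * x^-1)%g) /\
  forall g x, del (act g x) = (g * del x * (g^-1))%g.

(* Quasi-abelian 3-cocycle (omega, gamma, mu, c), conditions (a)-(g),
   with values in K^x. gamma g h x = gamma_{g,h}(x), mu g x y = mu_g(x,y). *)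
Definition quasi_abelian_3cocycle (act : gT -> xT -> xT) (del : xT -> gT)
  (omega : xT -> xT -> xT -> K) (gamma : gT -> gT -> xT -> K)
  (mu : gT -> xT -> xT -> K) (c : xT -> xT -> K) : Prop :=
  ((forall x y z, omega x y z != 0) /\ (forall g h x, gamma g h x != 0) /\
      (forall g x y, mu g x y != 0) /\ (forall x y, c x y != 0)) /\
   (forall w x y z,
      omega x y z * omega w (x * y)%g z * omega w x y
      = omega w x (y * z)%g * omega (w * x)%g y z) /\
   (forall g h k x,
      gamma h k x * gamma g (h * k)%g x = gamma (g * h)%g k x * gamma g h (act k x)) /\
   (forall g x y z,
      mu g y z * mu g x (y * z)%g / (mu g (x * y)%g z * mu g x y)
      = omega (act g x) (act g y) (act g z) / omega x y z) /\
   (forall g h x y,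
      gamma g h x * gamma g h y / gamma g h (x * y)%g
      = mu g (act h x) (act h y) * mu h x y / mu (g * h)%g x y) /\
   (forall g x y,
      c (act g x) (act g y) / c x y
      = mu g (x * y * x^-1)%g x / mu g x y *
        (gamma (g * del x * g^-1)%g g y / gamma g (del x) y)) /\
   (forall x y z,
      c (x * y)%g z
      = omega x y z * omega ((x * y) * z * (x * y)^-1)%g x y
        / (omega x (y * z * y^-1)%g y * gamma (del x) (del y) z)
        * c x (y * z * y^-1)%g * c y z) /\
   (forall x y z,
      c x (y * z)%g
      = omega (x * y * x^-1)%g x z
        / (omega x y z * omega (x * y * x^-1)%g (x * z * x^-1)%g x * mu (del x) y z)
        * c x y * c x z).

Definition normalized_cocycle
  (omega : xT -> xT -> xT -> K) (gamma : gT -> gT -> xT -> K)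
  (mu : gT -> xT -> xT -> K) (c : xT -> xT -> K) : Prop :=
  [/\ forall x y z, [|| x == 1%g, y == 1%g | z == 1%g] -> omega x y z = 1,
      forall g h x, [|| g == 1%g, h == 1%g | x == 1%g] -> gamma g h x = 1,
      forall g x y, [|| g == 1%g, x == 1%g | y == 1%g] -> mu g x y = 1
    & forall x y, (x == 1%g) || (y == 1%g) -> c x y = 1].

Definition orbit_reps (act : gT -> xT -> xT) (R : {set xT}) : Prop :=
  (forall x, exists2 r, r \in R & exists g, x = act g r) /\
  (forall r r' g, r \in R -> r' \in R -> act g r = r' -> r = r').

Definition Stab (act : gT -> xT -> xT) (a : xT) : {set gT} :=
  [set g | act g a == a].

(* A module is K^k (row vectors); t |> v is v *m rho t. *)
Record tmod := TMod { tm_dim : nat; tm_rho : gT -> 'M[K]_tm_dim }.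

Definition is_tmod (S : {set gT}) (phi : gT -> gT -> K) (V : tmod) : Prop :=
  tm_rho V 1%g = 1%:M /\
  (forall s t, s \in S -> t \in S ->
     tm_rho V (s * t)%g = phi s t *: (tm_rho V t *m tm_rho V s)).

Definition irr_tmod (S : {set gT}) (phi : gT -> gT -> K) (V : tmod) : Prop :=
  is_tmod S phi V /\ (0 < tm_dim V)%N /\
  (forall U : 'M[K]_(tm_dim V),
     (forall s, s \in S -> (U *m tm_rho V s <= U)%MS) ->
     U = 0 \/ row_full U).

Definition tmod_iso (S : {set gT}) (V V' : tmod) : Prop :=
  exists B : 'M[K]_(tm_dim V, tm_dim V'),
    [/\ row_free B, row_full B &
        forall s, s \in S -> tm_rho V s *m B = B *m tm_rho V' s].

(* An object: the X-graded space K^n with homogeneous standard basis,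
   e_i of degree eq_deg i; u_g : T_g(V) -> V is v |-> v *m eq_u g. *)
Record eqobj := EqObj {
  eq_dim : nat;
  eq_deg : 'I_eq_dim -> xT;
  eq_u : gT -> 'M[K]_eq_dim }.
Arguments eq_deg e _ : clear implicits.

Definition is_eqobj (act : gT -> xT -> xT) (gamma : gT -> gT -> xT -> K)
  (V : eqobj) : Prop :=
  [/\
      forall g (i j : 'I_(eq_dim V)), eq_u V g i j != 0 ->
        eq_deg V j = act g (eq_deg V i),
      forall g, eq_u V g \in unitmx
    & (* u_{gh} = u_g o T_g(u_h) o gamma~_{g,h}(V) *)
      forall g h, eq_u V (g * h)%g =
        diag_mx (\row_i gamma g h (eq_deg V i)) *m eq_u V h *m eq_u V g].

Definition is_eqmor (W V : eqobj)
  (F : 'M[K]_(eq_dim W, eq_dim V)) : Prop :=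
  (forall i j, F i j != 0 -> eq_deg W i = eq_deg V j) /\
  (forall g, eq_u W g *m F = F *m eq_u V g).
Arguments is_eqmor W V F : clear implicits.

Definition eq_iso (W V : eqobj) : Prop :=
  exists F : 'M[K]_(eq_dim W, eq_dim V),
    [/\ is_eqmor W V F, row_free F & row_full F].

Definition simple_eqobj (act : gT -> xT -> xT) (gamma : gT -> gT -> xT -> K)
  (V : eqobj) : Prop :=
  (0 < eq_dim V)%N /\
  forall (W : eqobj) (F : 'M[K]_(eq_dim W, eq_dim V)),
    is_eqobj act gamma W -> is_eqmor W V F -> row_free F ->
    eq_dim W = 0%N \/ row_full F.

End Defs.

(* A simple object of C(xi)^G is supported on a single G-orbit of degrees, that of
   some a in R, and its degree-a component is stable under the u_s, s in Stab_G(a);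
   as u_st = gamma_{s,t}(a) u_t u_s there, a minimal stable subspace of it is an
   irreducible K_{phi_a}[Stab_G(a)]-module.  Conversely a module V induces the
   object (+)_{b in G.a} V, with the b-summand in degree b and u_g mapping it to
   the g.b-summand by kappa(g,b) rho(t_{g.b}^-1 g t_b), where t_b carries a to b.
   The cocycle identity (b) for gamma shows that the scalars kappa(g,b) make
   u_gh = gamma_{g,h} u_h u_g hold.  The degree-a component of an induced object
   gives back V, hence injectivity; a simple object receives a monomorphism, hence
   an isomorphism, from the object induced by its minimal stable subspace. *)

From HB Require Import structures.
From mathcomp Require Import all_boot all_order all_fingroup all_algebra.
From Stdlib Require Import Classical.
From mathcomp Require Import ring.
Set Implicit Arguments. Unset Strict Implicit. Unset Printing Implicit Defensive.
Import GRing.Theory.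
Local Open Scope ring_scope.

Lemma sum_neq0_exists (M : zmodType) (I : finType) (P : pred I) (f : I -> M) :
  \sum_(i | P i) f i != 0 -> exists2 i, P i & f i != 0.
Proof.
move=> nz; have /existsP[i /andP[Pi fi]] : [exists i, P i && (f i != 0)].
  apply: contraR nz => /existsPn Hn; apply/eqP/big1 => i Pi.
  by move: (Hn i); rewrite Pi negbK => /eqP.
by exists i.
Qed.

Section Equivariant.
Variables (K : fieldType) (gT xT : finGroupType).
Variables (act : gT -> xT -> xT) (gamma : gT -> gT -> xT -> K).
Hypothesis act1 : forall x, act 1%g x = x.
Hypothesis actM : forall g h x, act (g * h)%g x = act g (act h x).

Local Notation eqobj := (eqobj K gT xT).
Local Notation deg O := (@eq_deg _ _ _ O).
Local Notation eqmor W V := (@is_eqmor _ _ _ W V).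

Lemma actK g : cancel (act g) (act g^-1).
Proof. by move=> x; rewrite -actM mulVg act1. Qed.

Lemma act_inj g : injective (act g).
Proof. exact: can_inj (actK g). Qed.

(** * Graded matrices and degree projections *)

Definition graded (W V : eqobj) (F : 'M[K]_(eq_dim W, eq_dim V)) :=
  forall i j, F i j != 0 -> deg W i = deg V j.

Definition supported (O : eqobj) m (J : 'M[K]_(m, eq_dim O)) (a : xT) :=
  forall i j, J i j != 0 -> deg O j = a.

Definition deg_proj (O : eqobj) (b : xT) : 'M[K]_(eq_dim O) :=
  diag_mx (\row_i (deg O i == b)%:R).

Definition gamma_diag (O : eqobj) g h : 'M[K]_(eq_dim O) :=
  diag_mx (\row_i gamma g h (deg O i)).

Lemma graded_deg_proj (W V : eqobj) (F : 'M[K]_(eq_dim W, eq_dim V)) :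
  graded F <-> forall b, deg_proj W b *m F = F *m deg_proj V b.
Proof.
rewrite /deg_proj; split=> [HF b | HF i j nz].
  rewrite mul_diag_mx mul_mx_diag; apply/matrixP=> i j; rewrite !mxE.
  have [->|/HF ->] := eqVneq (F i j) 0; first by rewrite mulr0 mul0r.
  by rewrite mulrC.
move/matrixP: (HF (deg W i)) => /(_ i j); rewrite mul_diag_mx mul_mx_diag !mxE.
rewrite eqxx mul1r; case: eqP => // _; rewrite mulr0 => E.
by rewrite E eqxx in nz.
Qed.

Lemma eqmor_inv (W V : eqobj) (F : 'M[K]_(eq_dim W, eq_dim V)) G :
  eqmor W V F -> F *m G = 1%:M -> G *m F = 1%:M -> eqmor V W G.
Proof.
move=> [/graded_deg_proj HF Hu] FG GF.
have swap M N : M *m F = F *m N -> N *m G = G *m M.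
  move=> E; apply/esym.
  by rewrite -[G *m M]mulmx1 -FG mulmxA -(mulmxA G M) E mulmxA GF mul1mx.
split; last by move=> g; exact: swap.
by apply/graded_deg_proj => b; exact: swap.
Qed.

Lemma eq_isoP (W V : eqobj) : eq_iso W V ->
  exists F G, [/\ eqmor W V F, eqmor V W G, F *m G = 1%:M & G *m F = 1%:M].
Proof.
move=> [F [HF /row_freeP[G FG] /row_fullP[G' GF]]].
have GG : G' = G by rewrite -[G']mulmx1 -FG mulmxA GF mul1mx.
subst G'; exists F, G; split=> //; exact: eqmor_inv HF FG GF.
Qed.

Lemma eq_iso_sym (W V : eqobj) : eq_iso W V -> eq_iso V W.
Proof.
move=> /eq_isoP[F [G [_ HG FG GF]]]; exists G; split=> //.
  by apply/row_freeP; exists F.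
by apply/row_fullP; exists F.
Qed.

Lemma deg_proj_u (O : eqobj) g b : is_eqobj act gamma O ->
  deg_proj O b *m eq_u O g = eq_u O g *m deg_proj O (act g b).
Proof.
move=> [Hd _ _]; rewrite /deg_proj mul_diag_mx mul_mx_diag.
apply/matrixP=> i j; rewrite !mxE.
have [->|/Hd ->] := eqVneq (eq_u O g i j) 0; first by rewrite mulr0 mul0r.
by rewrite (inj_eq (@act_inj g)) mulrC.
Qed.

Lemma stable_deg_proj_neq0 (O : eqobj) m (F : 'M[K]_(m, eq_dim O)) g b :
  is_eqobj act gamma O -> (F *m eq_u O g <= F)%MS ->
  F *m deg_proj O b != 0 -> F *m deg_proj O (act g b) != 0.
Proof.
move=> HO FU; apply: contraNneq => Fgb0; have [_ Hu _] := HO.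
have : (F *m deg_proj O b *m eq_u O g <= F *m deg_proj O (act g b))%MS.
  by rewrite -mulmxA deg_proj_u // mulmxA submxMr.
rewrite Fgb0 => /submx0null/(congr1 (mulmx^~ (invmx (eq_u O g)))).
by rewrite mulmxK ?Hu // mul0mx => ->.
Qed.

Lemma deg_proj_act_neq0 (O : eqobj) i g : is_eqobj act gamma O ->
  deg_proj O (act g (deg O i)) != 0.
Proof.
move=> HO; rewrite -[deg_proj _ _]mul1mx.
apply: stable_deg_proj_neq0; rewrite ?submx1 // mul1mx.
by apply/eqP => /matrixP/(_ i i); rewrite !mxE !eqxx /= => /eqP; rewrite oner_eq0.
Qed.

Lemma supported_u (O : eqobj) m (J : 'M[K]_(m, eq_dim O)) a g :
  is_eqobj act gamma O -> supported J a -> supported (J *m eq_u O g) (act g a).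
Proof.
move=> [Hd _ _] HJ i j; rewrite mxE => /sum_neq0_exists[k _].
by rewrite mulf_eq0 negb_or => /andP[/HJ <- /Hd ->].
Qed.

Lemma supported_gamma_diag (O : eqobj) m (J : 'M[K]_(m, eq_dim O)) a g h :
  supported J a -> J *m gamma_diag O g h = gamma g h a *: J.
Proof.
move=> HJ; rewrite /gamma_diag mul_mx_diag; apply/matrixP=> i j; rewrite !mxE.
have [->|/HJ ->] := eqVneq (J i j) 0; first by rewrite mulr0 mul0r.
by rewrite mulrC.
Qed.

(** * Orbits, transporters and Schreier elements *)

Definition orb (a : xT) : {set xT} := [set act g a | g : gT].

Lemma orb_act a g b : b \in orb a -> act g b \in orb a.
Proof. by case/imsetP=> h _ ->; rewrite -actM; apply: imset_f. Qed.

Lemma orb_refl a : a \in orb a.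
Proof. by apply/imsetP; exists 1%g; rewrite ?act1. Qed.

Lemma orb_meet a a' b : b \in orb a -> b \in orb a' -> a' \in orb a.
Proof.
case/imsetP=> g _ -> /imsetP[h _ E]; apply/imsetP; exists (h^-1 * g)%g => //.
by rewrite actM E actK.
Qed.

Lemma orbit_reps_eq R a a' : orbit_reps act R -> a \in R -> a' \in R -> a' \in orb a ->
  a = a'.
Proof. by move=> [_ HR] Ha Ha' /imsetP[g _ E]; exact: HR a a' g Ha Ha' (esym E). Qed.

Lemma orbit_reps_deg_proj R (O : eqobj) : orbit_reps act R -> is_eqobj act gamma O ->
  (0 < eq_dim O)%N -> exists2 r, r \in R & deg_proj O r != 0.
Proof.
move=> [HR _] HO dim_gt0; have [r Hr [g Eg]] := HR (deg O (Ordinal dim_gt0)).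
by exists r => //; rewrite -[r](actK g) -Eg; exact: deg_proj_act_neq0.
Qed.

Definition transporter (a b : xT) : gT :=
  if b == a then 1%g else odflt 1%g [pick g | act g a == b].

Lemma transporterP a b : b \in orb a -> act (transporter a b) a = b.
Proof.
rewrite /transporter; case: eqP => [->|_]; first by rewrite act1.
case/imsetP=> g _ ->; case: pickP => [h /eqP //|/(_ g)]; by rewrite eqxx.
Qed.

Lemma transporter_refl a : transporter a a = 1%g.
Proof. by rewrite /transporter eqxx. Qed.

Definition schreier (a : xT) g b : gT :=
  ((transporter a (act g b))^-1 * g * transporter a b)%g.

Lemma transporter_schreier a g b :
  (transporter a (act g b) * schreier a g b = g * transporter a b)%g.
Proof. by rewrite /schreier !mulgA mulgV mul1g. Qed.

Lemma schreier_stab a g b : b \in orb a -> schreier a g b \in Stab act a.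
Proof.
move=> Hb; rewrite inE /schreier !actM transporterP //.
by have := transporterP (orb_act g Hb); move: (transporter a _) => t <-; rewrite actK.
Qed.

Lemma schreier1g a b : schreier a 1%g b = 1%g.
Proof. by rewrite /schreier act1 mulg1 mulVg. Qed.

Lemma schreierM a g h b :
  schreier a (g * h)%g b = (schreier a g (act h b) * schreier a h b)%g.
Proof. by rewrite /schreier actM !mulgA mulgK. Qed.

Lemma schreier_stabE a s : s \in Stab act a -> schreier a s a = s.
Proof.
by rewrite inE => /eqP Hs; rewrite /schreier Hs transporter_refl invg1 mul1g mulg1.
Qed.

Lemma schreier_transporter a b : b \in orb a -> schreier a (transporter a b) a = 1%g.
Proof. by move=> Hb; rewrite /schreier transporterP // transporter_refl mulg1 mulVg. Qed.

Section TwistedInduction.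
Hypothesis gamma_neq0 : forall g h x, gamma g h x != 0.
Hypothesis gamma1g : forall h x, gamma 1%g h x = 1.
Hypothesis gammag1 : forall g x, gamma g 1%g x = 1.
Hypothesis gamma_cocycle : forall g h k x,
  gamma h k x * gamma g (h * k)%g x = gamma (g * h)%g k x * gamma g h (act k x).

Lemma eqobj_u1 (O : eqobj) : is_eqobj act gamma O -> eq_u O 1%g = 1%:M.
Proof.
move=> [_ Hu HM].
have D1 : gamma_diag O 1 1 = 1%:M.
  by apply/matrixP=> i j; rewrite !mxE gamma1g; case: (i == j).
have idem : eq_u O 1%g *m eq_u O 1%g = eq_u O 1%g.
  by have := HM 1%g 1%g; rewrite mulg1 -[diag_mx _]/(gamma_diag O 1 1) D1 mul1mx => /esym.
by rewrite -[eq_u O 1%g](mulKmx (Hu 1%g)) idem mulVmx.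
Qed.

Definition schreier_factor a g b : K :=
  gamma (transporter a (act g b)) (schreier a g b) a / gamma g (transporter a b) a.

Lemma schreier_factor_neq0 a g b : schreier_factor a g b != 0.
Proof. by rewrite mulf_neq0 // invr_eq0. Qed.

Lemma schreier_factor1g a b : schreier_factor a 1%g b = 1.
Proof. by rewrite /schreier_factor schreier1g act1 gammag1 gamma1g divr1. Qed.

Lemma schreier_factor_stab a s : s \in Stab act a -> schreier_factor a s a = 1.
Proof.
move=> Hs; move: (Hs); rewrite inE => /eqP Es.
by rewrite /schreier_factor schreier_stabE // Es transporter_refl gamma1g gammag1 divr1.
Qed.

Lemma schreier_factorM a g h b : b \in orb a ->
  schreier_factor a (g * h)%g b * gamma (schreier a g (act h b)) (schreier a h b) a =
  gamma g h b * schreier_factor a h b * schreier_factor a g (act h b).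
Proof.
move=> Hb; rewrite /schreier_factor schreierM actM.
have Hs1 := schreier_stab h Hb; have Hs2 := schreier_stab g (orb_act h Hb).
have e2 := transporter_schreier a h b; have e3 := transporter_schreier a g (act h b).
move: Hs1 Hs2 e2 e3; rewrite !inE.
set t := transporter a b; set t1 := transporter a (act h b).
set t2 := transporter a (act g (act h b)).
set s1 := schreier a h b; set s2 := schreier a g (act h b).
move=> /eqP Hs1 /eqP Hs2 e2 e3.
have I1 := gamma_cocycle g h t a; rewrite transporterP // in I1.
have I2 := gamma_cocycle g t1 s1 a; rewrite Hs1 e2 in I2.
have I3 := gamma_cocycle t2 s2 s1 a; rewrite Hs1 e3 in I3.
have E1 : gamma g h b = gamma h t a * gamma g (h * t) a / gamma (g * h) t a.
  by rewrite I1 mulrC mulKf.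
have E2 : gamma g (h * t) a = gamma (g * t1) s1 a * gamma g t1 a / gamma t1 s1 a.
  by rewrite -I2 mulrC mulKf.
have E3 : gamma s2 s1 a = gamma (g * t1) s1 a * gamma t2 s2 a / gamma t2 (s2 * s1) a.
  by rewrite -I3 mulfK.
by rewrite E3 E1 E2; field; rewrite !gamma_neq0.
Qed.

(** * Induced objects *)

Section Induced.
Variables (a : xT) (V : tmod K gT).
Local Notation n := (tm_dim V).
Local Notation rho := (tm_rho V).

Definition ind_index := {p : xT * 'I_n | p.1 \in orb a}.
Definition ind_dim := #|{: ind_index}|.
Definition ind_deg (k : 'I_ind_dim) : xT := (val (enum_val k)).1.
Definition ind_coord (k : 'I_ind_dim) : 'I_n := (val (enum_val k)).2.

(* [v *m ind_in b] is the copy of [v] in the summand of degree [b];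
   [ind_out b] reads that summand off again. *)
Definition ind_in (b : xT) : 'M[K]_(n, ind_dim) :=
  \matrix_(v, k) ((ind_deg k == b) && (ind_coord k == v))%:R.
Definition ind_out (b : xT) := (ind_in b)^T.

Definition ind_u g : 'M[K]_ind_dim :=
  \sum_(b in orb a)
     ind_out b *m (schreier_factor a g b *: rho (schreier a g b)) *m ind_in (act g b).

Definition induced : eqobj := EqObj ind_deg ind_u.

Lemma ind_deg_orb k : ind_deg k \in orb a.
Proof. exact: (valP (enum_val k)). Qed.

Lemma induced_dim_gt0 : (0 < n)%N -> (0 < ind_dim)%N.
Proof.
by move=> n_gt0; apply/card_gt0P; exists (exist _ (a, Ordinal n_gt0) (orb_refl a)).
Qed.

Lemma ind_deg_coord_eq k l :
  (ind_deg k == ind_deg l) && (ind_coord k == ind_coord l) = (k == l).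
Proof.
rewrite /ind_deg /ind_coord -xpair_eqE -!surjective_pairing.
by rewrite (inj_eq val_inj) (inj_eq enum_val_inj).
Qed.

Lemma ind_out_mul_entry b m (A : 'M[K]_(n, m)) k l :
  (ind_out b *m A) k l = (ind_deg k == b)%:R * A (ind_coord k) l.
Proof.
rewrite mxE (bigD1 (ind_coord k)) //= big1 => [|v /negbTE nv]; last first.
  by rewrite !mxE [ind_coord k == v]eq_sym nv andbF mul0r.
by rewrite !mxE eqxx andbT addr0.
Qed.

Lemma mul_ind_in_entry c m (A : 'M[K]_(m, n)) k l :
  (A *m ind_in c) k l = (ind_deg l == c)%:R * A k (ind_coord l).
Proof.
rewrite mxE (bigD1 (ind_coord l)) //= big1 => [|w /negbTE nw]; last first.
  by rewrite !mxE [ind_coord l == w]eq_sym nw andbF mulr0.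
by rewrite !mxE eqxx andbT addr0 mulrC.
Qed.

Lemma ind_out_mul_in_entry b c (A : 'M[K]_n) k l :
  (ind_out b *m A *m ind_in c) k l =
  ((ind_deg k == b) && (ind_deg l == c))%:R * A (ind_coord k) (ind_coord l).
Proof. by rewrite mul_ind_in_entry ind_out_mul_entry mulrA -natrM mulnb andbC. Qed.

Lemma ind_in_out_neq b c : b != c -> ind_in b *m ind_out c = 0.
Proof.
move=> nbc; apply/matrixP=> v w; rewrite !mxE big1 // => k _; rewrite !mxE.
by case: eqP => [->|]; rewrite ?(negbTE nbc) ?mulr0 ?mul0r.
Qed.

Lemma ind_in_out b : b \in orb a -> ind_in b *m ind_out b = 1%:M.
Proof.
move=> Hb; apply/matrixP=> v w; rewrite !mxE.
have -> : \sum_(k < ind_dim) ind_in b v k * ind_out b k w =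
          \sum_(x : ind_index) ((val x == (b, v)) && (val x == (b, w)))%:R.
  rewrite (reindex (@enum_rank _)) /=; last exact/onW_bij/enum_rank_bij.
  apply: eq_bigr => x _; rewrite !mxE /ind_deg /ind_coord enum_rankK -natrM mulnb.
  by rewrite -!xpair_eqE -!surjective_pairing.
rewrite (bigD1 (exist _ (b, v) Hb : ind_index)) //= big1 => [|x nx]; last first.
  by case: eqP => // Ex; move: nx; rewrite -val_eqE /= Ex eqxx.
by rewrite eqxx /= xpair_eqE eqxx /= addr0 eq_sym.
Qed.

Lemma deg_proj_induced b : deg_proj induced b = ind_out b *m ind_in b.
Proof.
apply/matrixP=> k l; rewrite -[ind_out b]mulmx1 ind_out_mul_in_entry.
rewrite !mxE -ind_deg_coord_eq /=.
case: (ind_deg k =P b) => [->|_]; last by rewrite mul0rn mul0r.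
case: (ind_deg l =P b) => [->|nl]; first by rewrite eqxx /= mul1r.
by rewrite [b == _]eq_sym (introF eqP nl) andbF /= mul0r.
Qed.

Lemma sum_ind_out_in : \sum_(b in orb a) ind_out b *m ind_in b = 1%:M.
Proof.
apply/matrixP=> k l; rewrite summxE.
under eq_bigr => b _ do rewrite -deg_proj_induced mxE.
rewrite (bigD1 (ind_deg k)) ?ind_deg_orb //= big1 ?addr0; first by rewrite !mxE eqxx.
by move=> b /andP[_ nb]; rewrite mxE eq_sym (negbTE nb) mul0rn.
Qed.

Lemma ind_in_u g b : b \in orb a ->
  ind_in b *m ind_u g =
  (schreier_factor a g b *: rho (schreier a g b)) *m ind_in (act g b).
Proof.
move=> Hb; rewrite mulmx_sumr (bigD1 b) //= big1 ?addr0.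
  by rewrite !mulmxA ind_in_out // mul1mx.
by move=> c /andP[_ nc]; rewrite !mulmxA ind_in_out_neq ?mul0mx // eq_sym.
Qed.

Lemma ind_u_out g b : b \in orb a ->
  ind_u g *m ind_out (act g b) =
  ind_out b *m (schreier_factor a g b *: rho (schreier a g b)).
Proof.
move=> Hb; rewrite mulmx_suml (bigD1 b) //= big1 ?addr0.
  by rewrite -!mulmxA ind_in_out ?orb_act // mulmx1.
move=> c /andP[_ nc]; rewrite -!mulmxA ind_in_out_neq ?mulmx0 //.
by apply: contra nc => /eqP /act_inj ->.
Qed.

Lemma gamma_diag_ind_out g h b : b \in orb a ->
  gamma_diag induced g h *m ind_out b = gamma g h b *: ind_out b.
Proof.
move=> Hb; rewrite /gamma_diag mul_diag_mx; apply/matrixP=> k v; rewrite !mxE /=.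
by case: (eqVneq (ind_deg k) b) => [->|nb]; rewrite ?(negbTE nb) /= ?mulr0.
Qed.

Hypothesis HV : is_tmod (Stab act a) (fun g h => gamma g h a) V.

Lemma ind_u1 : ind_u 1%g = 1%:M.
Proof.
rewrite /ind_u -sum_ind_out_in; apply: eq_bigr => b _.
by rewrite schreier1g schreier_factor1g act1 scale1r HV.1 mulmx1.
Qed.

Lemma ind_uM g h : ind_u (g * h)%g = gamma_diag induced g h *m ind_u h *m ind_u g.
Proof.
rewrite -mulmxA {2}/ind_u mulmx_suml mulmx_sumr; apply: eq_bigr => b Hb.
rewrite -!mulmxA ind_in_u ?orb_act // !mulmxA gamma_diag_ind_out //.
rewrite schreierM actM HV.2; try by apply: schreier_stab; rewrite ?orb_act.
rewrite -!scalemxAl -!scalemxAr !scalerA -!scalemxAl !scalerA.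
congr (_ *: _); last by rewrite !mulmxA.
by rewrite schreier_factorM // mulrAC.
Qed.

Lemma induced_eqobj : is_eqobj act gamma induced.
Proof.
split=> [g k l /= | g | ]; last exact: ind_uM.
  rewrite /ind_u summxE => /sum_neq0_exists[b _]; rewrite ind_out_mul_in_entry.
  case: (ind_deg k =P b) => [->|]; last by rewrite mul0r eqxx.
  by case: (ind_deg l =P act g b) => //; rewrite mul0r eqxx.
have := ind_uM g g^-1%g; rewrite mulgV ind_u1 -mulmxA => /esym/mulmx1_unit[_].
by rewrite unitmx_mul => /andP[].
Qed.

End Induced.

Section InducedSimple.
Variables (a : xT) (V : tmod K gT).

Lemma ind_in_u_stab s : s \in Stab act a ->
  tm_rho V s *m ind_in a V a = ind_in a V a *m ind_u a V s.
Proof.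
move=> Hs; rewrite ind_in_u ?orb_refl // schreier_stabE // schreier_factor_stab //.
by rewrite scale1r; move: Hs; rewrite inE => /eqP ->.
Qed.

Lemma ind_u_out_stab s : s \in Stab act a ->
  ind_u a V s *m ind_out a V a = ind_out a V a *m tm_rho V s.
Proof.
move=> Hs; have := ind_u_out V s (orb_refl a).
rewrite schreier_stabE // schreier_factor_stab // scale1r.
by move: Hs; rewrite inE => /eqP ->.
Qed.

Lemma ind_in_u_transporter b :
  is_tmod (Stab act a) (fun g h => gamma g h a) V -> b \in orb a ->
  ind_in a V a *m ind_u a V (transporter a b) =
  schreier_factor a (transporter a b) a *: ind_in a V b.
Proof.
move=> HV Hb; rewrite ind_in_u ?orb_refl // schreier_transporter // transporterP //.
by rewrite HV.1 -scalemxAl mul1mx.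
Qed.

Lemma ind_stable_full m (F : 'M[K]_(m, ind_dim a V)) :
  is_tmod (Stab act a) (fun g h => gamma g h a) V ->
  (forall g, (F *m ind_u a V g <= F)%MS) -> (ind_in a V a <= F)%MS -> row_full F.
Proof.
move=> HV FU Ea.
have Eb b : b \in orb a -> (ind_in a V b <= F)%MS.
  move=> Hb; have := ind_in_u_transporter HV Hb.
  move=> /(congr1 (fun M => (schreier_factor a (transporter a b) a)^-1 *: M)).
  rewrite scalerA mulVf ?schreier_factor_neq0 // scale1r => <-.
  by apply: scalemx_sub; exact: submx_trans (submxMr _ Ea) (FU _).
rewrite -sub1mx -(sum_ind_out_in a V); apply: summx_sub => b Hb.
exact: submx_trans (submxMl _ _) (Eb b Hb).
Qed.

Lemma ind_stable_sub m (F : 'M[K]_(m, ind_dim a V)) :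
  irr_tmod (Stab act a) (fun g h => gamma g h a) V ->
  (forall g, (F *m ind_u a V g <= F)%MS) -> (F *m deg_proj (induced a V) a <= F)%MS ->
  F *m ind_out a V a != 0 -> (ind_in a V a <= F)%MS.
Proof.
move=> [_ [_ Virr]] FU FPa Y0.
(* [U] consists of the [v] whose copy in degree [a] lies in [F]. *)
set U := kermx (ind_in a V a *m cokermx F).
have UF : (U *m ind_in a V a <= F)%MS by rewrite submxE -mulmxA mulmx_ker.
have YU : (F *m ind_out a V a <= U)%MS.
  apply/sub_kermxP; rewrite mulmxA -(mulmxA F) -deg_proj_induced.
  by apply/eqP; rewrite -submxE.
have Ustab s : s \in Stab act a -> (U *m tm_rho V s <= U)%MS.
  move=> Hs; apply/sub_kermxP; rewrite mulmxA -(mulmxA U) ind_in_u_stab // mulmxA.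
  by apply/eqP; rewrite -submxE; exact: submx_trans (submxMr _ UF) (FU s).
case: (Virr U Ustab) => [U0|Ufull].
  by move: YU; rewrite U0 submx0 (negbTE Y0).
rewrite submxE; apply/eqP; move: Ufull; rewrite -sub1mx => /sub_kermxP.
by rewrite mul1mx.
Qed.

Lemma induced_simple : irr_tmod (Stab act a) (fun g h => gamma g h a) V ->
  simple_eqobj act gamma (induced a V).
Proof.
move=> Virr; split; first exact: induced_dim_gt0 Virr.2.1.
move=> W F HW [/graded_deg_proj Hd Hu] Ffree.
have [W0|Wnz] := eqVneq (eq_dim W) 0%N; [by left | right].
have FU g : (F *m ind_u a V g <= F)%MS by rewrite -Hu submxMl.
have FP b : (F *m deg_proj (induced a V) b <= F)%MS by rewrite -Hd submxMl.
have [b Hb nb] : exists2 b, b \in orb a & F *m deg_proj (induced a V) b != 0.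
  apply: sum_neq0_exists; rewrite -mulmx_sumr.
  rewrite (eq_bigr _ (fun b _ => deg_proj_induced a V b)) sum_ind_out_in mulmx1.
  by rewrite -mxrank_eq0 (eqP Ffree).
have na : F *m deg_proj (induced a V) a != 0.
  have := stable_deg_proj_neq0 (induced_eqobj Virr.1) (FU (transporter a b)^-1%g) nb.
  by have -> : act (transporter a b)^-1%g b = a by rewrite -{2}(transporterP Hb) actK.
apply: (ind_stable_full Virr.1 FU); apply: ind_stable_sub => //.
by apply: contraNneq na; rewrite deg_proj_induced mulmxA => ->; rewrite mul0mx.
Qed.

End InducedSimple.

Section InducedMaps.
Variable a : xT.

Definition ind_map (V1 V2 : tmod K gT) (M : 'M[K]_(tm_dim V1, tm_dim V2)) :
  'M[K]_(ind_dim a V1, ind_dim a V2) :=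
  \sum_(b in orb a) ind_out a V1 b *m M *m ind_in a V2 b.

Lemma ind_in_map V1 V2 (M : 'M[K]_(tm_dim V1, tm_dim V2)) b : b \in orb a ->
  ind_in a V1 b *m ind_map M = M *m ind_in a V2 b.
Proof.
move=> Hb; rewrite mulmx_sumr (bigD1 b) //= big1 ?addr0.
  by rewrite !mulmxA ind_in_out // mul1mx.
by move=> c /andP[_ nc]; rewrite !mulmxA ind_in_out_neq ?mul0mx // eq_sym.
Qed.

Lemma ind_map_inv V1 V2 (M : 'M[K]_(tm_dim V1, tm_dim V2)) M' :
  M *m M' = 1%:M -> ind_map M *m ind_map M' = 1%:M.
Proof.
move=> HM; rewrite -(sum_ind_out_in a V1) /ind_map mulmx_suml.
apply: eq_bigr => b Hb.
by rewrite -mulmxA ind_in_map // mulmxA -(mulmxA _ M) HM mulmx1.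
Qed.

Lemma ind_map_eqmor V1 V2 (M : 'M[K]_(tm_dim V1, tm_dim V2)) :
  (forall s, s \in Stab act a -> tm_rho V1 s *m M = M *m tm_rho V2 s) ->
  eqmor (induced a V1) (induced a V2) (ind_map M).
Proof.
move=> HM; split=> [k l /= | g].
  rewrite summxE => /sum_neq0_exists[b _]; rewrite mul_ind_in_entry ind_out_mul_entry.
  case: (ind_deg l =P b) => [->|]; last by rewrite mul0r eqxx.
  by case: (ind_deg k =P b) => [->|] //; rewrite mul0r mulr0 eqxx.
rewrite /= {1}/ind_u mulmx_suml {2}/ind_map mulmx_suml.
apply: eq_bigr => b Hb; rewrite -!mulmxA ind_in_map ?orb_act // ind_in_u //.
rewrite -!scalemxAl -!scalemxAr; congr (_ *: _).
by rewrite (mulmxA (tm_rho V1 _)) HM ?schreier_stab // -mulmxA.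
Qed.

Lemma tmod_iso_induced_iso V1 V2 : tmod_iso (Stab act a) V1 V2 ->
  eq_iso (induced a V1) (induced a V2).
Proof.
move=> [B [/row_freeP[C1 BC1] /row_fullP[C2 C2B] HB]].
exists (ind_map B); split; first exact: ind_map_eqmor.
  by apply/row_freeP; exists (ind_map C1); exact: ind_map_inv.
by apply/row_fullP; exists (ind_map C2); exact: ind_map_inv.
Qed.

Definition ind_block V1 V2 (F : 'M[K]_(ind_dim a V1, ind_dim a V2)) :
  'M[K]_(tm_dim V1, tm_dim V2) := ind_in a V1 a *m F *m ind_out a V2 a.

Lemma ind_block1 V : ind_block (1%:M : 'M[K]_(ind_dim a V)) = 1%:M.
Proof. by rewrite /ind_block mulmx1 ind_in_out ?orb_refl. Qed.

Lemma ind_blockM V1 V2 V3 (F : 'M[K]_(ind_dim a V1, ind_dim a V2))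
    (G : 'M[K]_(ind_dim a V2, ind_dim a V3)) :
  @graded (induced a V1) (induced a V2) F ->
  ind_block F *m ind_block G = ind_block (F *m G).
Proof.
move=> /graded_deg_proj HF; rewrite /ind_block !mulmxA -(mulmxA _ (ind_out a V2 a)).
rewrite -deg_proj_induced -(mulmxA _ F) -HF deg_proj_induced !mulmxA.
by rewrite ind_in_out ?orb_refl // mul1mx.
Qed.

Lemma induced_iso_tmod_iso V1 V2 : eq_iso (induced a V1) (induced a V2) ->
  tmod_iso (Stab act a) V1 V2.
Proof.
move=> /eq_isoP[F [G [[HdF HuF] [HdG _] FG GF]]].
exists (ind_block F); split.
- by apply/row_freeP; exists (ind_block G); rewrite ind_blockM // FG ind_block1.
- by apply/row_fullP; exists (ind_block G); rewrite ind_blockM // GF ind_block1.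
move=> s Hs; rewrite /ind_block !mulmxA ind_in_u_stab // -(mulmxA _ _ F) HuF /=.
by rewrite mulmxA -!mulmxA ind_u_out_stab.
Qed.

End InducedMaps.

(** * Restriction to the degree-a component *)

Section Restriction.
Variables (O : eqobj) (a : xT).
Hypothesis HO : is_eqobj act gamma O.
Local Notation n := (eq_dim O).
Local Notation u := (eq_u O).
Local Notation S := (Stab act a).

Definition stab_stable m (M : 'M[K]_(m, n)) := forall s, s \in S -> (M *m u s <= M)%MS.

Lemma deg_proj_stab_stable : stab_stable (deg_proj O a).
Proof.
by move=> s; rewrite inE => /eqP Hs; rewrite deg_proj_u // Hs submxMl.
Qed.

Lemma exists_minimal_stable (M : 'M[K]_n) : M != 0 -> stab_stable M ->
  exists M0 : 'M[K]_n, [/\ M0 != 0, (M0 <= M)%MS, stab_stable M0 &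
    forall U : 'M[K]_n, (U <= M0)%MS -> stab_stable U -> U = 0 \/ (M0 <= U)%MS].
Proof.
have [k] := ubnP (\rank M); elim: k M => // k IH M ltMk M0 Ms.
have [Mmin|] := classic (forall U : 'M[K]_n,
  (U <= M)%MS -> stab_stable U -> U = 0 \/ (M <= U)%MS); first by exists M.
move=> /not_all_ex_not[U /not_all_ex_not[UM /not_all_ex_not[Us /not_or_and[U0 MU]]]].
have ltUk : (\rank U < k)%N.
  by rewrite -ltnS (leq_trans _ ltMk) // ltnS rank_ltmx // ltmxE UM; apply/negP.
have [V0 [V0nz V0U V0s V0min]] := IH U ltUk (introN eqP U0) Us.
by exists V0; split=> //; exact: submx_trans V0U UM.
Qed.

Lemma sub_deg_proj_supported m (J : 'M[K]_(m, n)) :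
  (J <= deg_proj O a)%MS -> supported J a.
Proof.
move=> /submxP[X ->] i j; rewrite /deg_proj mul_mx_diag !mxE.
by case: (deg O j =P a) => // _; rewrite mulr0 eqxx.
Qed.

Lemma supported_uM m (J : 'M[K]_(m, n)) g h : supported J a ->
  J *m u h *m u g = (gamma g h a)^-1 *: (J *m u (g * h)%g).
Proof.
move=> HJ; have [_ _ HM] := HO.
rewrite HM !mulmxA -[diag_mx _]/(gamma_diag O g h) (supported_gamma_diag _ _ HJ).
by rewrite -!scalemxAl scalerA mulVf // scale1r.
Qed.

Definition restr m (J : 'M[K]_(m, n)) : tmod K gT := TMod (fun g => J *m u g *m pinvmx J).

Section RestrictionTo.
Variables (m : nat) (J : 'M[K]_(m, n)).
Hypotheses (Jfree : row_free J) (Jsupp : supported J a) (Jstable : stab_stable J).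

Lemma restrP s : s \in S -> tm_rho (restr J) s *m J = J *m u s.
Proof. by move=> Hs; rewrite mulmxKpV // Jstable. Qed.

Lemma restr_tmod : is_tmod S (fun g h => gamma g h a) (restr J).
Proof.
have S1 : 1%g \in S by rewrite inE act1.
split.
  apply: (row_free_inj Jfree); rewrite /= restrP //.
  by rewrite (eqobj_u1 HO) mul1mx mulmx1.
move=> s t Hs Ht; apply: (row_free_inj Jfree) => /=.
have Hst : (s * t)%g \in S by move: Ht Hs; rewrite !inE actM => /eqP-> /eqP->.
rewrite restrP // -scalemxAl -mulmxA restrP // mulmxA restrP //.
by rewrite supported_uM // scalerA divff // scale1r.
Qed.

Lemma restr_irr : (0 < m)%N ->
  (forall U : 'M[K]_n, (U <= J)%MS -> stab_stable U -> U = 0 \/ (J <= U)%MS) ->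
  irr_tmod S (fun g h => gamma g h a) (restr J).
Proof.
move=> m_gt0 Jmin; split; first exact: restr_tmod.
split=> // U Ust.
have UJs : stab_stable <<U *m J>>%MS.
  move=> s Hs; rewrite (eqmxMr _ (genmxE _)) genmxE -mulmxA -restrP // mulmxA.
  exact: submxMr (Ust s Hs).
have UJJ : (<<U *m J>> <= J)%MS by rewrite genmxE submxMl.
case: (Jmin _ UJJ UJs) => [UJ0|JUJ].
  left; apply: (row_free_inj Jfree); rewrite /= mul0mx; apply/eqP.
  by rewrite -submx0 -UJ0 genmxE.
right; rewrite /row_full eqn_leq rank_leq_col /=.
have : (\rank J <= \rank (U *m J))%N.
  by apply: mxrankS; apply: submx_trans JUJ _; rewrite genmxE.
by rewrite (eqP Jfree) => /leq_trans; apply; exact: mxrankM_maxl.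
Qed.

End RestrictionTo.

Lemma exists_irr_restr : deg_proj O a != 0 ->
  exists m (J : 'M[K]_(m, n)), [/\ row_free J, supported J a, stab_stable J
    & irr_tmod S (fun g h => gamma g h a) (restr J)].
Proof.
move=> /exists_minimal_stable/(_ deg_proj_stab_stable)[M0 [M0nz M0P M0s M0min]].
have Jfree := row_base_free M0.
have Jsupp : supported (row_base M0) a.
  by apply: sub_deg_proj_supported; rewrite eq_row_base.
have Jstable : stab_stable (row_base M0).
  by move=> s Hs; rewrite (eqmxMr _ (eq_row_base M0)) eq_row_base M0s.
exists (\rank M0), (row_base M0); split=> //.
apply: restr_irr => //; first by rewrite lt0n mxrank_eq0.
by move=> U; rewrite !eq_row_base; exact: M0min.
Qed.

Section Lift.
Variables (m : nat) (J : 'M[K]_(m, n)).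
Hypotheses (Jfree : row_free J) (Jsupp : supported J a) (Jstable : stab_stable J).
Local Notation V := (restr J).

Definition ind_lift : 'M[K]_(ind_dim a V, n) :=
  \sum_(b in orb a) ind_out a V b *m J *m u (transporter a b).

Lemma ind_in_lift b : b \in orb a -> ind_in a V b *m ind_lift = J *m u (transporter a b).
Proof.
move=> Hb; rewrite mulmx_sumr (bigD1 b) //= big1 ?addr0.
  by rewrite !mulmxA (ind_in_out V Hb) mul1mx.
by move=> c /andP[_ nc]; rewrite !mulmxA (ind_in_out_neq a V) ?mul0mx // eq_sym.
Qed.

Lemma ind_lift_eqmor : eqmor (induced a V) O ind_lift.
Proof.
split=> [k l | g].
  rewrite summxE => /sum_neq0_exists[b Hb]; rewrite -mulmxA ind_out_mul_entry /=.
  case: (ind_deg k =P b) => [->|]; last by rewrite mul0r eqxx.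
  by rewrite mul1r => /(supported_u HO Jsupp); rewrite transporterP.
rewrite /= {1}/ind_u mulmx_suml /ind_lift mulmx_suml; apply: eq_bigr => b Hb.
rewrite -!mulmxA ind_in_lift ?orb_act // (mulmxA J) (supported_uM g _ Jsupp).
rewrite -scalemxAl (mulmxA (tm_rho V _)) restrP ?schreier_stab //.
rewrite (supported_uM _ _ Jsupp) scalerA transporter_schreier.
by congr (_ *m (_ *: _)); rewrite /schreier_factor mulrC mulrA mulVf ?mul1r.
Qed.

Lemma ind_lift_free : row_free ind_lift.
Proof.
have [/graded_deg_proj Hd _] := ind_lift_eqmor; have [_ Hu _] := HO.
rewrite -kermx_eq0; apply/eqP; have := mulmx_ker ind_lift.
move: (kermx ind_lift) => Z ZL.
have Zout b : b \in orb a -> Z *m ind_out a V b = 0.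
  move=> Hb; apply: (row_free_inj Jfree); rewrite /= mul0mx.
  have : Z *m ind_out a V b *m J *m u (transporter a b) = 0.
    rewrite -mulmxA -ind_in_lift // !mulmxA -(mulmxA Z) -deg_proj_induced.
    by rewrite -mulmxA Hd mulmxA ZL mul0mx.
  by move/(congr1 (mulmx^~ (invmx (u (transporter a b))))); rewrite mulmxK // mul0mx.
rewrite -[Z]mulmx1 -(sum_ind_out_in a V) mulmx_sumr big1 // => b Hb.
by rewrite mulmxA Zout // mul0mx.
Qed.

End Lift.

Lemma simple_iso_induced : simple_eqobj act gamma O -> deg_proj O a != 0 ->
  exists V, irr_tmod S (fun g h => gamma g h a) V /\ eq_iso O (induced a V).
Proof.
move=> [_ Osimple] /exists_irr_restr[m [J [Jfree Jsupp Jstable Virr]]].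
exists (restr J); split=> //; apply: eq_iso_sym.
have Lmor := ind_lift_eqmor Jsupp Jstable.
have Lfree := ind_lift_free Jfree Jsupp Jstable.
have [N0|Lfull] := Osimple _ _ (induced_eqobj Virr.1) Lmor Lfree.
  by move: (induced_dim_gt0 a Virr.2.1); rewrite -[ind_dim _ _]/(eq_dim (induced a _)) N0.
by exists (ind_lift J).
Qed.

End Restriction.

(** * Classification of simple objects *)

Lemma induced_iso_orb a a' V V' : (0 < tm_dim V)%N ->
  eq_iso (induced a V) (induced a' V') -> a' \in orb a.
Proof.
move=> dim_gt0 [F [[Hd _] Ffree _]].
have : F != 0 by rewrite -mxrank_eq0 (eqP Ffree) -lt0n induced_dim_gt0.
case/matrix0Pn=> k [l /Hd /= Ekl].
by apply: (orb_meet (ind_deg_orb k)); rewrite Ekl ind_deg_orb.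
Qed.

Section Classification.
Variable R : {set xT}.
Hypothesis HR : orbit_reps act R.

Lemma induced_iso_iff a V a' V' : a \in R -> a' \in R -> (0 < tm_dim V)%N ->
  eq_iso (induced a V) (induced a' V') <-> a = a' /\ tmod_iso (Stab act a) V V'.
Proof.
move=> Ha Ha' dim_gt0; split=> [iso | [<- /tmod_iso_induced_iso //]].
have Eaa' := orbit_reps_eq HR Ha Ha' (induced_iso_orb dim_gt0 iso).
by subst a'; split=> //; exact: induced_iso_tmod_iso.
Qed.

Theorem induced_classification :
  [/\ (forall a V, a \in R -> irr_tmod (Stab act a) (fun g h => gamma g h a) V ->
         is_eqobj act gamma (induced a V) /\ simple_eqobj act gamma (induced a V)),
      (forall a V a' V', a \in R -> irr_tmod (Stab act a) (fun g h => gamma g h a) V ->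
         a' \in R -> irr_tmod (Stab act a') (fun g h => gamma g h a') V' ->
         (eq_iso (induced a V) (induced a' V') <-> a = a' /\ tmod_iso (Stab act a) V V'))
    & (forall O, is_eqobj act gamma O -> simple_eqobj act gamma O ->
         exists a V, [/\ a \in R, irr_tmod (Stab act a) (fun g h => gamma g h a) V
                        & eq_iso O (induced a V)])].
Proof.
split=> [a V _ Virr | a V a' V' Ha Virr Ha' _ | O HO Osimple].
- by split; [exact: induced_eqobj Virr.1 | exact: induced_simple].
- exact: induced_iso_iff Virr.2.1.
have [r Hr Dr] := orbit_reps_deg_proj HR HO Osimple.1.
by have [V [Virr iso]] := simple_iso_induced HO Osimple Dr; exists r, V.
Qed.

End Classification.

End TwistedInduction.
End Equivariant.

Local Close Scope ring_scope.

Theorem proposition5p5 (K : closedFieldType) (gT xT : finGroupType)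
  (act : gT -> xT -> xT) (del : xT -> gT)
  (omega : xT -> xT -> xT -> K) (gamma : gT -> gT -> xT -> K)
  (mu : gT -> xT -> xT -> K) (c : xT -> xT -> K) (R : {set xT}) :
  [pchar K]%R =i pred0 ->
  crossed_module act del ->
  quasi_abelian_3cocycle act del omega gamma mu c ->
  normalized_cocycle omega gamma mu c ->
  orbit_reps act R ->
  exists Phi : xT -> tmod K gT -> eqobj K gT xT,
    [/\ (forall a V, a \in R -> irr_tmod (Stab act a) (fun g h => gamma g h a) V ->
           is_eqobj act gamma (Phi a V) /\ simple_eqobj act gamma (Phi a V)),
        (forall a V a' V', a \in R -> irr_tmod (Stab act a) (fun g h => gamma g h a) V ->
           a' \in R -> irr_tmod (Stab act a') (fun g h => gamma g h a') V' ->
           (eq_iso (Phi a V) (Phi a' V') <-> a = a' /\ tmod_iso (Stab act a) V V'))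
      & (forall O, is_eqobj act gamma O -> simple_eqobj act gamma O ->
           exists a V, [/\ a \in R, irr_tmod (Stab act a) (fun g h => gamma g h a) V
                          & eq_iso O (Phi a V)])].
Proof.
(* Only the action axioms and the normalized 2-cocycle gamma enter; the argument
   works over any field. *)
move=> _ [act1 [actM _]] [[_ [gamma_neq0 _]] [_ [gamma_cocycle _]]].
move=> [_ gamma_normal _ _] HR.
have gamma1g h x : gamma 1%g h x = 1%R by apply: gamma_normal; rewrite eqxx.
have gammag1 g x : gamma g 1%g x = 1%R by apply: gamma_normal; rewrite eqxx orbT.
exists (induced act gamma).
exact (induced_classification act1 actM gamma_neq0 gamma1g gammag1 gamma_cocycle HR).
Qed.
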